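(* Let $\Omega\subset\mathbb{R}$ be a bounded open interval and let $\varphi\in C^1(\overline\Omega)$ satisfy $\varphi>0$ in $\overline\Omega$. (i) For all $p>0$ and $q>0$, $$\int_\Omega\varphi^{-p}\le q^{\frac{2p}{q}}|\Omega|^{\frac{p+q}{q}}\Big\{\int_\Omega\varphi^{-q-2}\varphi_x^2\Big\}^{\frac pq}+2^{\frac{2p}{q}}|\Omega|^{p+1}\Big\{\int_\Omega\varphi\Big\}^{-p}.$$ (ii) The inequality $$-\int_\Omega\ln\varphi\le|\Omega|^{3/2}\Big\{\int_\Omega\frac{\varphi_x^2}{\varphi^2}\Big\}^{1/2}-|\Omega|\ln\Big\{\int_\Omega\varphi\Big\}+|\Omega|\ln|\Omega|$$ holds.
   Context: $|\Omega|$ denotes the length of $\Omega$. *)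

From Stdlib Require Import Reals.
From Coquelicot Require Import Coquelicot.
Open Scope R_scope.

(* Real power with the convention 0^y = 0 (used only for y > 0, x >= 0). *)
Definition rpow (x y : R) : R := if Rlt_dec 0 x then Rpower x y else 0.

Definition C1_closed (a b : R) (phi phi' : R -> R) : Prop :=
  (forall x, a < x < b -> is_derive phi x (phi' x)) /\
  (forall x, a <= x <= b ->
     filterlim phi (within (fun y => a <= y <= b) (locally x)) (locally (phi x)) /\
     filterlim phi' (within (fun y => a <= y <= b) (locally x)) (locally (phi' x))).

(* Let x0 be a point of the open interval where phi is at least its mean
   m = (int phi) / |Omega|.  For F nonincreasing on (0, oo), the fundamental
   theorem of calculus and Cauchy-Schwarz give for every x in Omega
     F (phi x) <= F (phi x0) + (|Omega| int ((F o phi)_x)^2)^(1/2)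
               <= F m        + (|Omega| int ((F o phi)_x)^2)^(1/2).
   For F = - ln this integrates to (ii).  For F y = y^(-q/2) one has
   ((F o phi)_x)^2 = (q/2)^2 phi^(-q-2) phi_x^2; raising the bound to the power
   2p/q with (A + B)^r <= 2^r (A^r + B^r) and integrating gives (i). *)

From Stdlib Require Import Reals Lra Classical.
From Coquelicot Require Import Coquelicot.
Open Scope R_scope.

Lemma rpow_Rpower x y : 0 < x -> rpow x y = Rpower x y.
Proof. intros Hx; unfold rpow; destruct Rlt_dec; [reflexivity | lra]. Qed.

Lemma rpow_0_l y : rpow 0 y = 0.
Proof. unfold rpow; destruct Rlt_dec; [lra | reflexivity]. Qed.

Lemma rpow_ge_0 x y : 0 <= rpow x y.
Proof. unfold rpow; destruct Rlt_dec; [left; apply exp_pos | lra]. Qed.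

Lemma rpow_le_compat x y c : 0 <= x <= y -> 0 <= c -> rpow x c <= rpow y c.
Proof.
  intros [[Hx | <-] Hxy] Hc.
  - rewrite !rpow_Rpower by lra. apply Rle_Rpower_l; lra.
  - rewrite rpow_0_l. apply rpow_ge_0.
Qed.

Lemma rpow_mult_distr x y c : 0 <= x -> 0 <= y -> rpow (x * y) c = rpow x c * rpow y c.
Proof.
  intros [Hx | <-] [Hy | <-].
  - rewrite !rpow_Rpower by nra. symmetry; apply Rpower_mult_distr; lra.
  - rewrite Rmult_0_r, rpow_0_l; ring.
  - rewrite Rmult_0_l, rpow_0_l; ring.
  - rewrite Rmult_0_l, rpow_0_l; ring.
Qed.

Lemma rpow_sqrt x c : 0 <= x -> rpow (sqrt x) (2 * c) = rpow x c.
Proof.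
  intros [Hx | <-].
  - rewrite !rpow_Rpower by (try apply sqrt_lt_R0; lra).
    rewrite <- Rpower_sqrt, Rpower_mult by lra. f_equal; field.
  - rewrite sqrt_0, !rpow_0_l; reflexivity.
Qed.

Lemma rpow_plus_le x y c : 0 <= x -> 0 <= y -> 0 <= c ->
  rpow (x + y) c <= Rpower 2 c * (rpow x c + rpow y c).
Proof.
  intros Hx Hy Hc.
  assert (Hmax : forall m, x + y <= 2 * m -> 0 <= m ->
            rpow (x + y) c <= Rpower 2 c * rpow m c).
  { intros m Hm Hm0. rewrite <- rpow_Rpower, <- rpow_mult_distr by lra.
    apply rpow_le_compat; lra. }
  assert (H2 : 0 < Rpower 2 c) by apply exp_pos.
  assert (Hxc := rpow_ge_0 x c). assert (Hyc := rpow_ge_0 y c).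
  destruct (Rle_or_lt y x).
  - eapply Rle_trans; [apply Hmax with (m := x); lra | nra].
  - eapply Rle_trans; [apply Hmax with (m := y); lra | nra].
Qed.

Lemma is_derive_Rpower c y : 0 < y ->
  is_derive (fun t => Rpower t c) y (c * Rpower y (c - 1)).
Proof. intros Hy. apply is_derive_Reals, derivable_pt_lim_power, Hy. Qed.

Lemma continuity_pt_Rpower c y : 0 < y -> continuity_pt (fun t => Rpower t c) y.
Proof.
  intros Hy. apply derivable_continuous_pt.
  exists (c * Rpower y (c - 1)). apply derivable_pt_lim_power, Hy.
Qed.

Lemma Rpower_le_compat_nonpos x y e : 0 < x <= y -> e <= 0 -> Rpower y e <= Rpower x e.
Proof.
  intros Hxy He. replace e with (- - e) by ring. rewrite (Rpower_Ropp y), (Rpower_Ropp x).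
  apply Rinv_le_contravar; [apply exp_pos | apply Rle_Rpower_l; lra].
Qed.

Lemma le_sqrt_of_sqr_le x K : x ^ 2 <= K -> x <= sqrt K.
Proof.
  intros Hx. destruct (Rle_or_lt x 0) as [Hneg | Hpos].
  - eapply Rle_trans; [exact Hneg | apply sqrt_pos].
  - rewrite <- (sqrt_pow2 x) by lra. apply sqrt_le_1_alt, Hx.
Qed.

Lemma continuity_pt_sqr (g : R -> R) x :
  continuity_pt g x -> continuity_pt (fun t => g t ^ 2) x.
Proof.
  intros Hg. apply (continuity_pt_comp g (fun y => y ^ 2)); [exact Hg |].
  apply derivable_continuous_pt, derivable_pt_pow.
Qed.

Lemma ex_RInt_continuity_pt (f : R -> R) a b : a <= b ->
  (forall x, a <= x <= b -> continuity_pt f x) -> ex_RInt f a b.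
Proof.
  intros Hab Hf. apply (ex_RInt_continuous (V := R_CompleteNormedModule)).
  rewrite Rmin_left, Rmax_right by exact Hab.
  intros x Hx; apply continuity_pt_filterlim, Hf, Hx.
Qed.

Lemma RInt_ext_le (f g : R -> R) a b : a <= b ->
  (forall x, a < x < b -> f x = g x) -> RInt f a b = RInt g a b.
Proof.
  intros Hab Hfg. apply RInt_ext.
  rewrite Rmin_left, Rmax_right by exact Hab. exact Hfg.
Qed.

Lemma RInt_le_const (f : R -> R) a b C : a <= b -> ex_RInt f a b ->
  (forall x, a < x < b -> f x <= C) -> RInt f a b <= (b - a) * C.
Proof.
  intros Hab Hf HC.
  replace ((b - a) * C) with (RInt (fun _ => C) a b)
    by (rewrite RInt_const; reflexivity).
  apply RInt_le; [exact Hab | exact Hf | apply ex_RInt_const | exact HC].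
Qed.

Lemma RInt_subinterval_le (h : R -> R) a b u v : a <= u -> u <= v -> v <= b ->
  (forall x, a <= x <= b -> continuity_pt h x) -> (forall x, a < x < b -> 0 <= h x) ->
  RInt h u v <= RInt h a b.
Proof.
  intros Hau Huv Hvb Hc Hpos.
  assert (Hex : forall m M, a <= m -> m <= M -> M <= b -> ex_RInt h m M)
    by (intros m M ???; apply ex_RInt_continuity_pt; [lra | intros; apply Hc; lra]).
  assert (Hchasles : RInt h a b = RInt h a u + RInt h u v + RInt h v b).
  { rewrite <- (RInt_Chasles h a u b), <- (RInt_Chasles h u v b) by (apply Hex; lra).
    unfold plus; simpl; ring. }
  assert (0 <= RInt h a u) by (apply RInt_ge_0; [lra | apply Hex; lra | intros; apply Hpos; lra]).
  assert (0 <= RInt h v b) by (apply RInt_ge_0; [lra | apply Hex; lra | intros; apply Hpos; lra]).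
  lra.
Qed.

Lemma RInt_sqr_le (g : R -> R) a b : a <= b ->
  ex_RInt g a b -> ex_RInt (fun t => g t ^ 2) a b ->
  RInt g a b ^ 2 <= (b - a) * RInt (fun t => g t ^ 2) a b.
Proof.
  intros [Hab | <-] Hg Hg2.
  2: { rewrite !RInt_point. change (@zero R_CompleteNormedModule) with 0. lra. }
  set (A := RInt g a b). set (I := RInt (fun t => g t ^ 2) a b).
  set (t := A / (b - a)).
  (* integrate [2 t g <= g^2 + t^2] and optimise in [t] *)
  assert (Hint : 2 * t * A <= I + (b - a) * t ^ 2).
  { assert (Hlin : RInt (fun x => 2 * t * g x) a b = 2 * t * A)
      by exact (RInt_scal g a b (2 * t) Hg).
    assert (Haff : RInt (fun x => g x ^ 2 + t ^ 2) a b = I + (b - a) * t ^ 2).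
    { transitivity (plus I (RInt (fun _ => t ^ 2) a b)).
      - exact (RInt_plus _ _ a b Hg2 (ex_RInt_const a b (t ^ 2))).
      - rewrite RInt_const; reflexivity. }
    rewrite <- Hlin, <- Haff.
    apply RInt_le; [lra | | |].
    - exact (ex_RInt_scal g a b (2 * t) Hg).
    - exact (ex_RInt_plus _ _ a b Hg2 (ex_RInt_const a b (t ^ 2))).
    - intros x _. pose proof (pow2_ge_0 (g x - t)). nra. }
  assert (HA : A = t * (b - a))
    by (unfold t, Rdiv; rewrite Rmult_assoc, Rinv_l, Rmult_1_r by lra; reflexivity).
  rewrite HA in Hint |- *.
  assert (Ht : (b - a) * t ^ 2 <= I) by nra.
  apply (Rmult_le_compat_l (b - a)) in Ht; [nra | lra].
Qed.

Lemma derive_oscillation_le (psi g : R -> R) a b u v :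
  (forall x, a < x < b -> is_derive psi x (g x)) ->
  (forall x, a <= x <= b -> continuity_pt g x) ->
  a < u < b -> a < v < b ->
  psi v - psi u <= sqrt ((b - a) * RInt (fun t => g t ^ 2) a b).
Proof.
  intros Hd Hc Hu Hv. apply le_sqrt_of_sqr_le.
  assert (Hg2 : forall x, a <= x <= b -> continuity_pt (fun t => g t ^ 2) x)
    by (intros; apply continuity_pt_sqr, Hc; assumption).
  assert (Hsq : forall u v, a < u <= v -> v < b ->
            (psi v - psi u) ^ 2 <= (b - a) * RInt (fun t => g t ^ 2) a b).
  { clear u v Hu Hv. intros u v Huv Hvb.
    assert (Hftc : RInt g u v = psi v - psi u).
    { apply is_RInt_unique, (is_RInt_derive (V := R_CompleteNormedModule));
        rewrite Rmin_left, Rmax_right by lra; intros x Hx.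
      - apply Hd; lra.
      - apply continuity_pt_filterlim, Hc; lra. }
    rewrite <- Hftc.
    eapply Rle_trans.
    { apply RInt_sqr_le; [lra | |]; apply ex_RInt_continuity_pt; try lra;
        intros; [apply Hc | apply Hg2]; lra. }
    apply Rmult_le_compat; [lra | | lra |].
    - apply RInt_ge_0; [lra | | intros; apply pow2_ge_0].
      apply ex_RInt_continuity_pt; [lra | intros; apply Hg2; lra].
    - apply RInt_subinterval_le; try lra; [exact Hg2 | intros; apply pow2_ge_0]. }
  destruct (Rle_or_lt u v).
  - apply Hsq; lra.
  - replace ((psi v - psi u) ^ 2) with ((psi u - psi v) ^ 2) by ring. apply Hsq; lra.
Qed.

Section PositiveC1.

Variables (a b : R) (f f' : R -> R).
Hypothesis Hab : a < b.
Hypothesis f_cont : forall x, a <= x <= b -> continuity_pt f x.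
Hypothesis f'_cont : forall x, a <= x <= b -> continuity_pt f' x.
Hypothesis f_pos : forall x, a <= x <= b -> 0 < f x.
Hypothesis f_deriv : forall x, a < x < b -> is_derive f x (f' x).

Lemma RInt_pos : 0 < RInt f a b.
Proof.
  apply RInt_gt_0; [exact Hab | intros; apply f_pos; lra |].
  intros; apply continuity_pt_filterlim, f_cont; assumption.
Qed.

Lemma exists_ge_mean : exists x0, a < x0 < b /\ RInt f a b / (b - a) <= f x0.
Proof.
  set (m := RInt f a b / (b - a)).
  apply NNPP; intros Hnone.
  assert (Hlt : forall x, a < x < b -> f x < m).
  { intros x Hx. apply Rnot_le_lt. intros Hm. apply Hnone. exists x; auto. }
  assert (Hint : RInt f a b < RInt (fun _ => m) a b).
  { apply RInt_lt; [exact Hab | | | exact Hlt]; intros x Hx.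
    - apply continuous_const.
    - apply continuity_pt_filterlim, f_cont, Hx. }
  rewrite RInt_const in Hint. change (scal (b - a) m) with ((b - a) * m) in Hint.
  unfold m, Rdiv in Hint.
  rewrite Rmult_comm, Rmult_assoc, Rinv_l, Rmult_1_r in Hint by lra. lra.
Qed.

Lemma ex_RInt_comp (F : R -> R) :
  (forall y, 0 < y -> continuity_pt F y) -> ex_RInt (fun t => F (f t)) a b.
Proof.
  intros HF. apply ex_RInt_continuity_pt; [lra |]. intros x Hx.
  apply (continuity_pt_comp f F); [apply f_cont, Hx | apply HF, f_pos, Hx].
Qed.

Lemma nonincreasing_comp_le_mean (F F' : R -> R) :
  (forall y, 0 < y -> is_derive F y (F' y)) -> (forall y, 0 < y -> continuity_pt F' y) ->
  (forall y z, 0 < y <= z -> F z <= F y) ->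
  forall x, a < x < b ->
  F (f x) <= F (RInt f a b / (b - a))
             + sqrt ((b - a) * RInt (fun t => (F' (f t) * f' t) ^ 2) a b).
Proof.
  intros HF HF' Hdecr x Hx.
  destruct exists_ge_mean as [x0 [Hx0 Hmean]].
  assert (Hmean_pos : 0 < RInt f a b / (b - a))
    by (apply Rdiv_lt_0_compat; [apply RInt_pos | lra]).
  assert (Hosc : F (f x) - F (f x0)
                 <= sqrt ((b - a) * RInt (fun t => (F' (f t) * f' t) ^ 2) a b)).
  { apply (derive_oscillation_le (fun t => F (f t))); [| | exact Hx0 | exact Hx].
    - intros t Ht. rewrite Rmult_comm.
      apply (is_derive_comp F f t); [apply HF, f_pos; lra | apply f_deriv, Ht].
    - intros t Ht. apply continuity_pt_mult; [| apply f'_cont, Ht].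
      apply (continuity_pt_comp f F'); [apply f_cont, Ht | apply HF', f_pos, Ht]. }
  assert (F (f x0) <= F (RInt f a b / (b - a))) by (apply Hdecr; lra).
  lra.
Qed.

Lemma opp_ln_le_mean_oscillation x : a < x < b ->
  - ln (f x) <= - ln (RInt f a b / (b - a))
                + sqrt ((b - a) * RInt (fun t => f' t ^ 2 / f t ^ 2) a b).
Proof.
  intros Hx.
  replace (RInt (fun t => f' t ^ 2 / f t ^ 2) a b)
    with (RInt (fun t => (- / f t * f' t) ^ 2) a b).
  - apply (nonincreasing_comp_le_mean (fun y => - ln y) (fun y => - / y)); [| | | exact Hx].
    + intros y Hy. exact (is_derive_opp _ _ _ (is_derive_ln y Hy)).
    + intros y Hy. apply continuity_pt_filterlim.
      exact (continuous_opp _ _ (continuous_Rinv y (Rgt_not_eq _ _ Hy))).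
    + intros y z Hyz. apply Ropp_le_contravar, ln_le; lra.
  - apply RInt_ext_le; [lra |]; intros t Ht.
    assert (f t <> 0) by (apply Rgt_not_eq, f_pos; lra). field; assumption.
Qed.

Lemma opp_RInt_ln_le :
  - RInt (fun x => ln (f x)) a b <=
    Rpower (b - a) (3 / 2) * sqrt (RInt (fun x => f' x ^ 2 / f x ^ 2) a b)
    - (b - a) * ln (RInt f a b) + (b - a) * ln (b - a).
Proof.
  assert (Hex := ex_RInt_comp ln (fun y Hy => proj2 (continuity_pt_filterlim _ _) (continuous_ln y Hy))).
  assert (Hopp : RInt (fun x => - ln (f x)) a b = - RInt (fun x => ln (f x)) a b)
    by exact (RInt_opp _ a b Hex).
  rewrite <- Hopp.
  eapply Rle_trans.
  { apply RInt_le_const; [lra | exact (ex_RInt_opp _ a b Hex) | exact opp_ln_le_mean_oscillation]. }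
  assert (HL : 0 < b - a) by lra.
  assert (HRp : Rpower (b - a) (3 / 2) = (b - a) * sqrt (b - a)).
  { replace (3 / 2) with (1 + / 2) by field.
    rewrite Rpower_plus, Rpower_1, Rpower_sqrt by exact HL. reflexivity. }
  rewrite HRp, sqrt_mult_alt, ln_div by (apply RInt_pos || lra). lra.
Qed.

Lemma ex_RInt_Rpower_mult_sqr c : ex_RInt (fun t => Rpower (f t) c * f' t ^ 2) a b.
Proof.
  apply ex_RInt_continuity_pt; [lra |]. intros x Hx.
  apply continuity_pt_mult; [| apply continuity_pt_sqr, f'_cont, Hx].
  apply (continuity_pt_comp f (fun t => Rpower t c));
    [apply f_cont, Hx | apply continuity_pt_Rpower, f_pos, Hx].
Qed.

Lemma Rpower_le_mean_oscillation q x : 0 < q -> a < x < b ->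
  Rpower (f x) (- q / 2) <= Rpower (RInt f a b / (b - a)) (- q / 2)
    + q / 2 * sqrt ((b - a) * RInt (fun t => Rpower (f t) (- q - 2) * f' t ^ 2) a b).
Proof.
  intros Hq Hx.
  set (J := RInt (fun t => Rpower (f t) (- q - 2) * f' t ^ 2) a b).
  set (F' := fun y => - q / 2 * Rpower y (- q / 2 - 1)).
  assert (HK : RInt (fun t => (F' (f t) * f' t) ^ 2) a b = (q / 2) ^ 2 * J).
  { transitivity (RInt (fun t => (q / 2) ^ 2 * (Rpower (f t) (- q - 2) * f' t ^ 2)) a b).
    - apply RInt_ext_le; [lra |]. intros t _. unfold F'; cbv beta.
      replace (- q - 2) with ((- q / 2 - 1) + (- q / 2 - 1)) by field.
      rewrite Rpower_plus. field.
    - exact (RInt_scal _ a b ((q / 2) ^ 2) (ex_RInt_Rpower_mult_sqr (- q - 2))). }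
  assert (Hsqrt : sqrt ((b - a) * ((q / 2) ^ 2 * J)) = q / 2 * sqrt ((b - a) * J)).
  { replace ((b - a) * ((q / 2) ^ 2 * J)) with ((q / 2) ^ 2 * ((b - a) * J)) by ring.
    rewrite sqrt_mult_alt, sqrt_pow2 by nra. reflexivity. }
  rewrite <- Hsqrt, <- HK.
  apply (nonincreasing_comp_le_mean (fun y => Rpower y (- q / 2)) F'); [| | | exact Hx].
  - intros y Hy. apply is_derive_Rpower, Hy.
  - intros y Hy. apply continuity_pt_mult;
      [apply continuity_pt_const; intros ??; reflexivity | apply continuity_pt_Rpower, Hy].
  - intros y z Hyz. apply Rpower_le_compat_nonpos; lra.
Qed.

Lemma RInt_Rpower_opp_le p q : 0 < p -> 0 < q ->
  RInt (fun x => Rpower (f x) (- p)) a b <=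
    Rpower q (2 * p / q) * Rpower (b - a) ((p + q) / q) *
      rpow (RInt (fun x => Rpower (f x) (- q - 2) * f' x ^ 2) a b) (p / q)
    + Rpower 2 (2 * p / q) * Rpower (b - a) (p + 1) * Rpower (RInt f a b) (- p).
Proof.
  intros Hp Hq.
  assert (HP := RInt_pos).
  set (L := b - a). set (P := RInt f a b) in *.
  set (J := RInt (fun x => Rpower (f x) (- q - 2) * f' x ^ 2) a b).
  set (r := 2 * p / q).
  assert (HL : 0 < L) by (unfold L; lra).
  assert (Hr : r = 2 * (p / q)) by (unfold r; field; lra).
  assert (Hr0 : 0 <= r) by (rewrite Hr; apply Rmult_le_pos; [lra | apply Rle_mult_inv_pos; lra]).
  assert (HJ : 0 <= J).
  { apply RInt_ge_0; [lra | apply ex_RInt_Rpower_mult_sqr |]. intros x _.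
    apply Rmult_le_pos; [left; apply exp_pos | apply pow2_ge_0]. }
  assert (Hpow : forall y, 0 < y -> Rpower y (- p) = rpow (Rpower y (- q / 2)) r).
  { intros y Hy. rewrite rpow_Rpower, Rpower_mult by apply exp_pos.
    f_equal. unfold r. field. lra. }
  assert (Hpt : forall x, a < x < b -> Rpower (f x) (- p) <=
            Rpower 2 r * (Rpower (P / L) (- p) + Rpower (q / 2) r * rpow (L * J) (p / q))).
  { intros x Hx.
    rewrite Hpow by (apply f_pos; lra).
    eapply Rle_trans.
    { apply rpow_le_compat; [split; [left; apply exp_pos |] | exact Hr0].
      apply Rpower_le_mean_oscillation; assumption. }
    fold P L J.
    eapply Rle_trans.
    { apply rpow_plus_le; [left; apply exp_pos | | exact Hr0].
      apply Rmult_le_pos; [lra | apply sqrt_pos]. }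
    rewrite <- Hpow by (apply Rdiv_lt_0_compat; lra).
    rewrite rpow_mult_distr, rpow_Rpower by (lra || apply sqrt_pos).
    rewrite Hr, rpow_sqrt by (apply Rmult_le_pos; lra).
    apply Rle_refl. }
  eapply Rle_trans.
  { apply RInt_le_const; [lra | | exact Hpt].
    exact (ex_RInt_comp (fun y => Rpower y (- p)) (continuity_pt_Rpower (- p))). }
  assert (Hmean : Rpower (P / L) (- p) = Rpower L p * Rpower P (- p)).
  { unfold Rpower. rewrite ln_div, <- exp_plus by assumption. f_equal; ring. }
  assert (Hq2 : Rpower q r = Rpower 2 r * Rpower (q / 2) r).
  { rewrite Rpower_mult_distr by lra. f_equal; field. }
  replace ((p + q) / q) with (p / q + 1) by (field; lra).
  rewrite Hmean, rpow_mult_distr, rpow_Rpower, !Rpower_plus, !Rpower_1, Hq2 by lra.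
  fold L. apply Req_le. ring.
Qed.

End PositiveC1.

(* [C1_closed] only gives continuity within [a, b] at the endpoints; composing
   with [clamp a b] yields functions continuous on a neighbourhood of [a, b],
   as the integration lemmas require, without changing any integral over [a, b]. *)
Definition clamp (a b x : R) : R := Rmax a (Rmin b x).

Lemma clamp_in a b x : a <= b -> a <= clamp a b x <= b.
Proof. intros; unfold clamp, Rmax, Rmin; repeat destruct Rle_dec; lra. Qed.

Lemma clamp_id a b x : a <= x <= b -> clamp a b x = x.
Proof. intros; unfold clamp, Rmax, Rmin; repeat destruct Rle_dec; lra. Qed.

Lemma clamp_dist a b x y : Rabs (clamp a b y - clamp a b x) <= Rabs (y - x).
Proof.
  unfold clamp, Rmax, Rmin, Rabs; repeat destruct Rle_dec; repeat destruct Rcase_abs; lra.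
Qed.

Lemma continuity_pt_comp_clamp (h : R -> R) a b x : a <= b ->
  (forall y, a <= y <= b ->
     filterlim h (within (fun z => a <= z <= b) (locally y)) (locally (h y))) ->
  continuity_pt (fun y => h (clamp a b y)) x.
Proof.
  intros Hab Hh. apply continuity_pt_filterlim.
  eapply filterlim_comp; [| apply Hh, clamp_in, Hab].
  intros P [eps HP]. exists eps. intros y Hy. apply HP; [| apply clamp_in, Hab].
  eapply Rle_lt_trans; [apply clamp_dist | exact Hy].
Qed.

Lemma is_derive_comp_clamp (h : R -> R) a b x l : a < x < b ->
  is_derive h x l -> is_derive (fun y => h (clamp a b y)) x l.
Proof.
  intros Hx. apply is_derive_ext_loc.
  assert (Hloc : locally x (fun y => a < y < b))
    by (apply (open_and _ _ (open_gt a) (open_lt b)), Hx).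
  eapply filter_imp; [| exact Hloc].
  intros y Hy. rewrite clamp_id; lra.
Qed.

Lemma RInt_comp_clamp (h : R -> R) a b : a <= b ->
  RInt h a b = RInt (fun x => h (clamp a b x)) a b.
Proof. intros Hab. apply RInt_ext_le; [exact Hab |]. intros x Hx. rewrite clamp_id; lra. Qed.

Theorem lemma5p1 (a b : R) (phi phi' : R -> R) :
  a < b ->
  C1_closed a b phi phi' ->
  (forall x, a <= x <= b -> 0 < phi x) ->
  (forall p q : R, 0 < p -> 0 < q ->
     RInt (fun x => Rpower (phi x) (- p)) a b <=
       Rpower q (2 * p / q) * Rpower (b - a) ((p + q) / q) *
         rpow (RInt (fun x => Rpower (phi x) (- q - 2) * (phi' x) ^ 2) a b) (p / q)
       + Rpower 2 (2 * p / q) * Rpower (b - a) (p + 1) *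
         Rpower (RInt phi a b) (- p))
  /\
  (- RInt (fun x => ln (phi x)) a b <=
     Rpower (b - a) (3 / 2) *
       sqrt (RInt (fun x => (phi' x) ^ 2 / (phi x) ^ 2) a b)
     - (b - a) * ln (RInt phi a b) + (b - a) * ln (b - a)).
Proof.
  intros Hab [Hd Hc] Hpos.
  set (f := fun x => phi (clamp a b x)). set (f' := fun x => phi' (clamp a b x)).
  assert (f_cont : forall x, a <= x <= b -> continuity_pt f x)
    by (intros; apply continuity_pt_comp_clamp; [lra | apply Hc]).
  assert (f'_cont : forall x, a <= x <= b -> continuity_pt f' x)
    by (intros; apply continuity_pt_comp_clamp; [lra | apply Hc]).
  assert (f_pos : forall x, a <= x <= b -> 0 < f x)
    by (intros; apply Hpos, clamp_in; lra).
  assert (f_deriv : forall x, a < x < b -> is_derive f x (f' x)).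
  { intros x Hx. unfold f'. rewrite clamp_id by lra.
    apply is_derive_comp_clamp, Hd; exact Hx. }
  rewrite (RInt_comp_clamp phi) by lra.
  split.
  - intros p q Hp Hq.
    rewrite (RInt_comp_clamp (fun x => Rpower (phi x) (- p))),
      (RInt_comp_clamp (fun x => Rpower (phi x) (- q - 2) * phi' x ^ 2)) by lra.
    exact (RInt_Rpower_opp_le a b f f' Hab f_cont f'_cont f_pos f_deriv p q Hp Hq).
  - rewrite (RInt_comp_clamp (fun x => ln (phi x))),
      (RInt_comp_clamp (fun x => phi' x ^ 2 / phi x ^ 2)) by lra.
    exact (opp_RInt_ln_le a b f f' Hab f_cont f'_cont f_pos f_deriv).
Qed.
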